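(* Let Assumptions (A1), (A2) and (A3) from the context hold and let $\gamma>0$. Consider the event-triggered estimator $$\dot{\mathbf z}(t)=-\gamma\mathbf z(t)-\mathbf w(t),\qquad \mathbf x(t)=\mathbf z(t)+\boldsymbol\phi(t),\qquad \mathbf z(t_0)=\mathbf z_0,$$ $$\mathbf w(t)=(w_1(t)^T,\dots,w_n(t)^T)^T=(B\otimes I_r)\,\widehat K(t)\,\mathrm{sgn}\{\hat{\boldsymbol\xi}(t)\},\qquad \hat{\boldsymbol\xi}(t)=(B^T\otimes I_r)\hat{\mathbf x}(t).$$ Here $\widehat K(t)$ is diagonal with positive initial diagonal entries $\hat\kappa_j(t_0)$, and it is updated by $\dot{\hat\kappa}_j(t)=|\hat\xi_j(t)|$, where $\hat\xi_j$ is the $j$-th scalar component of $\hat{\boldsymbol\xi}$. The two directed copies of each undirected edge are given the same initial gains. Equivalently, agentwise, $\dot z_i=-\gamma z_i-2\sum_j\mathrm{diag}[\mu_{i,j}]\,\mathrm{sgn}\{\hat x_i-\hat x_j\}$ with $\dot\mu_{i,j}=|\hat x_i-\hat x_j|$ for neighbors, $\mu_{i,j}=\mu_{j,i}$, and $\mu_{i,j}\equiv0$ for non-neighbors. The broadcast state is $\hat x_i(t)=x_i(t^i_{k_i(t)})$ with $t^i_{k_i(t)}=\max\{t^i_k:t^i_k\le t\}$. Let $\boldsymbol\varepsilon(t)=(\varepsilon_1^T,\dots,\varepsilon_n^T)^T=\mathbf x(t)-\hat{\mathbf x}(t)$. Each agent runs the internal dynamics $$\dot\eta_i(t)=-\alpha_i\eta_i(t)-\delta_i\big(\beta_i\mathbf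 1_r^T|\varepsilon_i(t)|-w_i(t)^T\varepsilon_i(t)\big),\qquad \eta_i(t_0)>0,$$ with arbitrary $\alpha_i>0$ and $\delta_i\ge1$. Each agent determines its triggering times by $t^i_1=t_0$ and $$t^i_{k+1}=\min\Big\{t> t^i_k:\ \theta_i\big(\beta_i\mathbf 1_r^T|\varepsilon_i(t)|-w_i(t)^T\varepsilon_i(t)\big)\ge\eta_i(t)\Big\},$$ with $\theta_i\in(0,1)$. Then for every initial condition $\mathbf z_0$ the average consensus error $\tilde{\mathbf x}(t)=\mathbf x(t)-\mathbf 1_n\otimes\bar\phi(t)$ converges to zero as $t\to\infty$.
   Context: There are $n$ agents $v_1,\dots,v_n$ communicating over an undirected graph $\mathcal G(\mathcal V,\mathcal E)$. Each undirected edge is regarded as two distinct directed edges, so the edge set is $\mathcal E=\{e_1,\dots,e_\ell\}$. The incidence matrix $B=[b_{ij}]\in\{-1,0,1\}^{n\times\ell}$ has $b_{ij}=-1$ if edge $e_j$ leaves $v_i$, $b_{ij}=1$ if $e_j$ enters $v_i$, and $0$ otherwise. $I_r$ is the $r\times r$ identity, $\mathbf 1_r$ the all-ones vector, $\otimes$ the Kronecker product, and $(\cdot)^+$ the Moore–Penrose generalized inverse. For vectors, $|\cdot|$ and $\mathrm{sgn}\{\cdot\}$ act componentwise, with $\mathrm{sgn}(0)=0$. $\|\cdot\|_\infty$ applied to a matrix is the induced $\infty$-norm. Each agent $v_i$ has a continuously differentiable reference signal $\phi_i(t)\in\mathbb R^r$; $\boldsymbol\phi(t)=(\phi_1^T,\dots,\phi_n^T)^T$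 and $\bar\phi(t)=\frac1n\sum_i\phi_i(t)$. The estimates are $\mathbf x(t)=(x_1^T,\dots,x_n^T)^T$ and $\hat{\mathbf x}(t)=(\hat x_1^T,\dots,\hat x_n^T)^T$. Between its event times, each $\hat x_i$ is held constant. (A1) The graph $\mathcal G$ is connected and undirected. (A2) There exist constants $\varphi,\dot\varphi<\infty$ such that $\sup_{t\ge0}\|(B^T\otimes I_r)\boldsymbol\phi(t)\|_\infty\le\varphi$ and $\sup_{t\ge0}\|(B^T\otimes I_r)\dot{\boldsymbol\phi}(t)\|_\infty\le\dot\varphi$. (A3) Each agent has a gain $\beta_i\ge(\gamma\varphi+\dot\varphi)\,\|B(B^TB)^+\otimes I_r\|_\infty$. *)

From Stdlib Require Import Reals Lra Lia Relations.
Open Scope R_scope.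

Fixpoint rsum (N : nat) (f : nat -> R) : R :=
  match N with O => 0 | S m => rsum m f + f m end.

(* Maximum of f 0, ..., f (N-1) (and 0); used only for nonnegative values. *)
Fixpoint rmaxn (N : nat) (f : nat -> R) : R :=
  match N with O => 0 | S m => Rmax (rmaxn m f) (f m) end.

(* Matrices are functions nat -> nat -> R, dimensions carried separately. *)
Definition mtr (A : nat -> nat -> R) : nat -> nat -> R := fun i j => A j i.
Definition mmul (p : nat) (A B : nat -> nat -> R) : nat -> nat -> R :=
  fun i j => rsum p (fun k => A i k * B k j).
Definition mat_eq (m p : nat) (A B : nat -> nat -> R) : Prop :=
  forall i j, (i < m)%nat -> (j < p)%nat -> A i j = B i j.

(* X (p x m) is the Moore-Penrose generalized inverse of A (m x p):
   the four Penrose equations (real case: transpose). *)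
Definition is_pinv (m p : nat) (A X : nat -> nat -> R) : Prop :=
  mat_eq m p (mmul m (mmul p A X) A) A /\
  mat_eq p m (mmul p (mmul m X A) X) X /\
  mat_eq m m (mtr (mmul p A X)) (mmul p A X) /\
  mat_eq p p (mtr (mmul m X A)) (mmul m X A).

(* M (x) I_r with the standard index flattening (a = i*r + k). *)
Definition kronI (r : nat) (M : nat -> nat -> R) : nat -> nat -> R :=
  fun a b => M (a / r)%nat (b / r)%nat *
             (if Nat.eqb (a mod r) (b mod r) then 1 else 0).

Definition infnorm (m p : nat) (M : nat -> nat -> R) : R :=
  rmaxn m (fun a => rsum p (fun b => Rabs (M a b))).

Definition sgn (x : R) : R :=
  if Rlt_dec 0 x then 1 else if Rlt_dec x 0 then -1 else 0.

Definition Binc (src dst : nat -> nat) (i e : nat) : R :=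
  if Nat.eqb (dst e) i then 1 else if Nat.eqb (src e) i then -1 else 0.

(* Graph: l directed edges, each undirected edge appearing as two distinct
   directed edges; no self loops, no duplicate directed edges. *)
Definition undirected_edge_list (n l : nat) (src dst : nat -> nat) : Prop :=
  (forall e, (e < l)%nat -> (src e < n)%nat /\ (dst e < n)%nat /\ src e <> dst e) /\
  (forall e1 e2, (e1 < l)%nat -> (e2 < l)%nat ->
      src e1 = src e2 -> dst e1 = dst e2 -> e1 = e2) /\
  (forall e, (e < l)%nat -> exists e', (e' < l)%nat /\ src e' = dst e /\ dst e' = src e).

Definition adj (l : nat) (src dst : nat -> nat) (i j : nat) : Prop :=
  exists e, (e < l)%nat /\ src e = i /\ dst e = j.

Definition connected (n l : nat) (src dst : nat -> nat) : Prop :=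
  forall i j, (i < n)%nat -> (j < n)%nat -> clos_refl_trans nat (adj l src dst) i j.

Definition rderiv (f : R -> R) (t d : R) : Prop :=
  forall eps, 0 < eps -> exists delta, 0 < delta /\
    forall h, 0 < h < delta -> Rabs ((f (t + h) - f t) / h - d) < eps.

(* hat xi_{e,k}(t) = ((B^T (x) I_r) hat x(t))_{(e,k)}. *)
Definition xi_hat (src dst : nat -> nat) (xhat : nat -> nat -> R -> R)
  (e k : nat) (t : R) : R := xhat (dst e) k t - xhat (src e) k t.

(* w_{i,k}(t) = ((B (x) I_r) hat K(t) sgn{hat xi(t)})_{(i,k)}. *)
Definition w_sig (l : nat) (src dst : nat -> nat) (kappa : nat -> nat -> R -> R)
  (xhat : nat -> nat -> R -> R) (i k : nat) (t : R) : R :=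
  rsum l (fun e => Binc src dst i e * kappa e k t * sgn (xi_hat src dst xhat e k t)).

(* Triggering condition of agent i at time t, relative to its previous
   triggering time s (so eps_i(t) = x_i(t) - x_i(s)). *)
Definition trig_cond (r : nat) (theta beta : R) (x : nat -> R -> R)
  (wi : nat -> R -> R) (etai : R -> R) (s t : R) : Prop :=
  theta * (beta * rsum r (fun k => Rabs (x k t - x k s))
           - rsum r (fun k => wi k t * (x k t - x k s))) >= etai t.

From Stdlib Require Import Reals Relations Lra Lia Classical.
Open Scope R_scope.

(* Write [x~ = x - 1_n (x) phibar].  On a connected graph [B (B^T B)^+ B^T] is the
   projection orthogonal to consensus, so the forcing term of the [x~]-dynamics, the
   deviation of [gamma phi + phi'] from its average, equals [B (B^T B)^+] applied to
   the edge differences of [gamma phi + phi'] and is bounded by [beta_i] by (A2)-(A3).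
   With an ideal gain [kappa_star], the function
     V = 1/2 |x~|^2 + 1/2 sum_e (kappa_e - kappa_star)^2 + sum_i eta_i / delta_i
   satisfies [V' <= -gamma |x~|^2]: the gain adaptation absorbs the edge terms, and the
   trigger functions [beta_i 1^T |eps_i| - w_i^T eps_i] left by the sign feedback on the
   broadcast states are cancelled by the [eta]-dynamics.  The triggering rule keeps
   [eta_i >= 0], hence [V >= 0]; so [x~] and the gains stay bounded, [x~] is Lipschitz,
   and [int |x~|^2 < oo] forces [x~ -> 0]. *)

Lemma rsum_ext N f g : (forall j, (j < N)%nat -> f j = g j) -> rsum N f = rsum N g.
Proof.
  induction N; intros H; simpl; [reflexivity|].
  rewrite IHN by (intros; apply H; lia). rewrite H by lia. reflexivity.
Qed.

Lemma rsum_plus N f g : rsum N (fun j => f j + g j) = rsum N f + rsum N g.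
Proof. induction N; simpl; [lra|]. rewrite IHN; lra. Qed.

Lemma rsum_minus N f g : rsum N (fun j => f j - g j) = rsum N f - rsum N g.
Proof. induction N; simpl; [lra|]. rewrite IHN; lra. Qed.

Lemma rsum_scal N c f : rsum N (fun j => c * f j) = c * rsum N f.
Proof. induction N; simpl; [lra|]. rewrite IHN; lra. Qed.

Lemma rsum_scalr N c f : rsum N (fun j => f j * c) = rsum N f * c.
Proof. induction N; simpl; [lra|]. rewrite IHN; lra. Qed.

Lemma rsum_zero N : rsum N (fun _ => 0) = 0.
Proof. induction N; simpl; [lra|]. rewrite IHN; lra. Qed.

Lemma rsum_const N c : rsum N (fun _ => c) = INR N * c.
Proof. induction N; simpl rsum; [simpl; lra|]. rewrite IHN, S_INR; lra. Qed.

Lemma rsum_le N f g : (forall j, (j < N)%nat -> f j <= g j) -> rsum N f <= rsum N g.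
Proof.
  induction N; intros H; simpl; [lra|].
  assert (rsum N f <= rsum N g) by (apply IHN; intros; apply H; lia).
  pose proof (H N ltac:(lia)). lra.
Qed.

Lemma rsum_nonneg N f : (forall j, (j < N)%nat -> 0 <= f j) -> 0 <= rsum N f.
Proof. intros H. rewrite <- (rsum_zero N). apply rsum_le. auto. Qed.

Lemma rsum_abs N f : Rabs (rsum N f) <= rsum N (fun j => Rabs (f j)).
Proof.
  induction N; simpl; [rewrite Rabs_R0; lra|].
  eapply Rle_trans; [apply Rabs_triang|]. lra.
Qed.

Lemma rsum_swap N M (F : nat -> nat -> R) :
  rsum N (fun i => rsum M (fun j => F i j)) = rsum M (fun j => rsum N (fun i => F i j)).
Proof.
  induction N; simpl.
  - rewrite rsum_zero; reflexivity.
  - rewrite IHN, <- rsum_plus. reflexivity.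
Qed.

Lemma rsum_term_le N f a :
  (forall j, (j < N)%nat -> 0 <= f j) -> (a < N)%nat -> f a <= rsum N f.
Proof.
  induction N; intros H Ha; [lia|]. simpl.
  assert (0 <= rsum N f) by (apply rsum_nonneg; intros; apply H; lia).
  destruct (Nat.eq_dec a N) as [->|Hne]; [lra|].
  assert (f a <= rsum N f) by (apply IHN; [intros; apply H|]; lia).
  pose proof (H N ltac:(lia)); lra.
Qed.

Lemma rsum2_term_le N M (F : nat -> nat -> R) a b :
  (forall j k, (j < N)%nat -> (k < M)%nat -> 0 <= F j k) -> (a < N)%nat -> (b < M)%nat ->
  F a b <= rsum N (fun j => rsum M (F j)).
Proof.
  intros H Ha Hb.
  apply Rle_trans with (rsum M (F a)); [apply rsum_term_le; auto|].
  apply (rsum_term_le N (fun j => rsum M (F j))); auto.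
  intros; apply rsum_nonneg; auto.
Qed.

Lemma rsum_delta N a c : (a < N)%nat -> rsum N (fun j => if Nat.eqb a j then c j else 0) = c a.
Proof.
  induction N; intros Ha; [lia|]. simpl.
  destruct (Nat.eq_dec a N) as [->|Hne].
  - rewrite Nat.eqb_refl, (rsum_ext N _ (fun _ => 0)), rsum_zero; [lra|].
    intros j Hj. destruct (Nat.eqb_spec N j); [lia|reflexivity].
  - rewrite IHN by lia. destruct (Nat.eqb_spec a N); [lia|lra].
Qed.

Lemma rsum_mul_split l r F :
  rsum (l * r) F = rsum l (fun e => rsum r (fun k => F (e * r + k)%nat)).
Proof.
  assert (Hadd : forall a b f, rsum (a + b) f = rsum a f + rsum b (fun j => f (a + j)%nat)).
  { intros a b f. induction b; simpl.
    - rewrite Nat.add_0_r; lra.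
    - rewrite Nat.add_succ_r. simpl. rewrite IHb; lra. }
  induction l; simpl; [reflexivity|]. rewrite Nat.add_comm, Hadd, IHl. lra.
Qed.

Lemma rsum_sq_eq0 N g : rsum N (fun j => g j * g j) = 0 -> forall j, (j < N)%nat -> g j = 0.
Proof.
  intros H j Hj.
  assert (g j * g j <= rsum N (fun j => g j * g j)).
  { apply (rsum_term_le N (fun j => g j * g j)); auto. intros; nra. }
  nra.
Qed.

Lemma rmaxn_ge N f a : (a < N)%nat -> f a <= rmaxn N f.
Proof.
  induction N; intros Ha; [lia|]. simpl.
  destruct (Nat.eq_dec a N) as [->|Hne]; [apply Rmax_r|].
  eapply Rle_trans; [apply IHN; lia|apply Rmax_l].
Qed.

Lemma infnorm_kronI_row r n l M i : (0 < r)%nat -> (i < n)%nat ->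
  rsum l (fun e => Rabs (M i e)) <= infnorm (n * r) (l * r) (kronI r M).
Proof.
  intros Hr Hi. unfold infnorm.
  eapply Rle_trans;
    [|apply (rmaxn_ge (n * r) (fun a => rsum (l * r) (fun b => Rabs (kronI r M a b))) (i * r)); nia].
  rewrite rsum_mul_split. right. apply rsum_ext. intros e He. unfold kronI.
  rewrite Nat.div_mul, Nat.Div0.mod_mul by lia.
  rewrite <- (rsum_delta r 0 (fun _ => Rabs (M i e))) by lia.
  apply rsum_ext. intros k Hk.
  assert (Hd : ((e * r + k) / r = e)%nat) by (symmetry; apply (Nat.div_unique _ _ _ k); lia).
  assert (Hm : ((e * r + k) mod r = k)%nat) by (symmetry; apply (Nat.mod_unique _ _ e); lia).
  rewrite Hd, Hm. destruct (Nat.eqb 0 k).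
  - rewrite Rmult_1_r; reflexivity.
  - rewrite Rmult_0_r, Rabs_R0; reflexivity.
Qed.

(* Row [e] of [X := (A P) B^T] satisfies [X B = A P A = A] and [X X^T = A], so the
   squared distance between [X] and [B^T] vanishes. *)
Lemma pinv_gram_mul_tr n l B P : is_pinv l l (mmul n (mtr B) B) P ->
  forall e j, (e < l)%nat -> (j < n)%nat ->
  rsum l (fun c => mmul l (mmul n (mtr B) B) P e c * B j c) = B j e.
Proof.
  intros [HAPA _] e j0 He Hj0.
  set (A := mmul n (mtr B) B).
  assert (HA : forall c d, A c d = rsum n (fun j => B j c * B j d)) by reflexivity.
  assert (Hsym : forall c d, A c d = A d c) by (intros; rewrite !HA; apply rsum_ext; intros; lra).
  set (Q := fun c => mmul l A P e c).
  set (X := fun j => rsum l (fun c => Q c * B j c)).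
  assert (HQA : forall d, (d < l)%nat -> rsum l (fun c => Q c * A c d) = A e d)
    by (intros d Hd; apply (HAPA e d He Hd)).
  assert (HXB : forall d, rsum n (fun j => X j * B j d) = rsum l (fun c => Q c * A c d)).
  { intros d. unfold X.
    rewrite (rsum_ext n _ (fun j => rsum l (fun c => Q c * B j c * B j d)))
      by (intros; rewrite <- rsum_scalr; reflexivity).
    rewrite rsum_swap. apply rsum_ext. intros c _.
    rewrite HA, <- rsum_scal. apply rsum_ext; intros; lra. }
  assert (HXX : rsum n (fun j => X j * X j) = A e e).
  { rewrite (rsum_ext n _ (fun j => rsum l (fun d => Q d * (X j * B j d)))).
    2:{ intros j _. unfold X at 2. rewrite <- rsum_scal. apply rsum_ext; intros; lra. }
    rewrite rsum_swap, (rsum_ext l _ (fun d => Q d * A d e)); [apply HQA; auto|].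
    intros d Hd. rewrite rsum_scal, HXB, HQA, Hsym; auto. }
  assert (Hdist : rsum n (fun j => (X j - B j e) * (X j - B j e)) = 0).
  { rewrite (rsum_ext n _ (fun j => X j * X j - 2 * (X j * B j e) + B j e * B j e)) by (intros; ring).
    rewrite rsum_plus, rsum_minus, rsum_scal, HXX, HXB, HQA, <- HA by auto. ring. }
  pose proof (rsum_sq_eq0 n _ Hdist j0 Hj0) as Hj. unfold X in Hj. lra.
Qed.

Lemma sgn_mul_self x : sgn x * x = Rabs x.
Proof.
  unfold sgn. destruct (Rlt_dec 0 x); [rewrite Rabs_pos_eq; lra|].
  destruct (Rlt_dec x 0); [rewrite Rabs_left; lra|].
  replace x with 0 by lra. rewrite Rabs_R0; lra.
Qed.

Lemma sgn_abs_le1 x : Rabs (sgn x) <= 1.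
Proof.
  unfold sgn. destruct (Rlt_dec 0 x); [|destruct (Rlt_dec x 0)];
    unfold Rabs; destruct Rcase_abs; lra.
Qed.

Section Incidence.

Variables (n l : nat) (src dst : nat -> nat).
Hypothesis Hedge : forall e, (e < l)%nat -> (src e < n)%nat /\ (dst e < n)%nat /\ src e <> dst e.

Lemma Binc_abs_le1 i e : Rabs (Binc src dst i e) <= 1.
Proof.
  unfold Binc. destruct (Nat.eqb (dst e) i); [|destruct (Nat.eqb (src e) i)];
    unfold Rabs; destruct Rcase_abs; lra.
Qed.

Lemma rsum_Binc e h : (e < l)%nat -> rsum n (fun i => Binc src dst i e * h i) = h (dst e) - h (src e).
Proof.
  intros He. destruct (Hedge e He) as (Hs & Hd & Hne).
  rewrite (rsum_ext n _ (fun i => (if Nat.eqb (dst e) i then h i else 0)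
                                - (if Nat.eqb (src e) i then h i else 0))).
  - rewrite rsum_minus, !rsum_delta; auto.
  - intros i _. unfold Binc.
    destruct (Nat.eqb_spec (dst e) i), (Nat.eqb_spec (src e) i); subst; try ring. congruence.
Qed.

Lemma rsum_Binc_adjoint (y a : nat -> R) :
  rsum n (fun i => y i * rsum l (fun e => Binc src dst i e * a e))
  = rsum l (fun e => a e * (y (dst e) - y (src e))).
Proof.
  rewrite (rsum_ext n _ (fun i => rsum l (fun e => Binc src dst i e * y i * a e)))
    by (intros; rewrite <- rsum_scal; apply rsum_ext; intros; ring).
  rewrite rsum_swap. apply rsum_ext. intros e He.
  rewrite rsum_scalr, rsum_Binc by auto. ring.
Qed.

Lemma rsum_Binc_combination (a : nat -> R) :
  rsum n (fun i => rsum l (fun e => Binc src dst i e * a e)) = 0.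
Proof.
  rewrite (rsum_ext n _ (fun i => 1 * rsum l (fun e => Binc src dst i e * a e))) by (intros; ring).
  rewrite rsum_Binc_adjoint, <- (rsum_zero l). apply rsum_ext; intros; ring.
Qed.

Variable P : nat -> nat -> R.
Hypothesis HP : is_pinv l l (mmul n (mtr (Binc src dst)) (Binc src dst)) P.
Hypothesis Hconn : connected n l src dst.

Lemma connected_edge_invariant (h : nat -> R) :
  (forall e, (e < l)%nat -> h (dst e) = h (src e)) -> forall j, (j < n)%nat -> h j = h 0%nat.
Proof.
  intros Hh j Hj.
  assert (Hpath : forall a b, clos_refl_trans nat (adj l src dst) a b -> h a = h b).
  { intros a b Hab. induction Hab as [x y [e (He & <- & <-)] | x | x y z _ IH1 _ IH2];
      [symmetry; auto|reflexivity|congruence]. }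
  apply Hpath, Hconn; lia.
Qed.

Lemma rsum_Binc_pinv_mul (g : nat -> R) :
  rsum n (fun i => rsum l (fun e => mmul l (Binc src dst) P i e * g e)) = 0.
Proof.
  rewrite (rsum_ext n _ (fun i => rsum l (fun c => Binc src dst i c * rsum l (fun e => P c e * g e)))).
  - apply rsum_Binc_combination.
  - intros i _. unfold mmul.
    rewrite (rsum_ext l _ (fun e => rsum l (fun c => Binc src dst i c * P c e * g e)))
      by (intros; symmetry; apply rsum_scalr).
    rewrite rsum_swap. apply rsum_ext. intros c _. rewrite <- rsum_scal. apply rsum_ext; intros; ring.
Qed.

(* This is [B^T B P B^T = B^T], i.e. [pinv_gram_mul_tr], applied to [f]. *)
Lemma rsum_Binc_Binc_pinv f e : (e < l)%nat ->
  rsum n (fun i => Binc src dst i e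
                   * rsum l (fun e' => mmul l (Binc src dst) P i e' * (f (dst e') - f (src e'))))
  = f (dst e) - f (src e).
Proof.
  intros He. set (B := Binc src dst) in *. set (A := mmul n (mtr B) B).
  set (g := fun e => f (dst e) - f (src e)).
  assert (Hg : forall e, (e < l)%nat -> g e = rsum n (fun j => B j e * f j))
    by (intros e' He'; unfold B; rewrite rsum_Binc; auto).
  rewrite (rsum_ext n _ (fun i => rsum l (fun e' => B i e * mmul l B P i e' * g e'))).
  2:{ intros i _. rewrite <- rsum_scal. apply rsum_ext; intros; unfold g; ring. }
  rewrite rsum_swap, (rsum_ext l _ (fun e' => mmul l A P e e' * g e')).
  2:{ intros e' _. rewrite rsum_scalr. f_equal. unfold mmul at 1.
      rewrite (rsum_ext n _ (fun i => rsum l (fun c => B i e * B i c * P c e')))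
        by (intros; rewrite <- rsum_scal; apply rsum_ext; intros; ring).
      rewrite rsum_swap. apply rsum_ext. intros c _. unfold A, mmul, mtr. rewrite rsum_scalr. reflexivity. }
  rewrite (rsum_ext l _ (fun e' => rsum n (fun j => mmul l A P e e' * B j e' * f j)))
    by (intros; rewrite Hg, <- rsum_scal by auto; apply rsum_ext; intros; ring).
  fold (g e). rewrite rsum_swap, (Hg e He). apply rsum_ext. intros j Hj.
  unfold A. rewrite rsum_scalr, (pinv_gram_mul_tr n l B P HP e j He Hj). ring.
Qed.

(* [f - mean f = B (B^T B)^+ B^T f]: the residual [h] is killed by [B^T], hence
   constant on the connected graph, and it has the same sum as [f]. *)
Lemma dev_mean_Binc_pinv f i : (i < n)%nat ->
  f i - / INR n * rsum n f
  = rsum l (fun e => mmul l (Binc src dst) P i e * (f (dst e) - f (src e))).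
Proof.
  intros Hi.
  set (h := fun i => f i - rsum l (fun e => mmul l (Binc src dst) P i e * (f (dst e) - f (src e)))).
  assert (Hedge_h : forall e, (e < l)%nat -> h (dst e) = h (src e)).
  { intros e He.
    enough (HBh : rsum n (fun i => Binc src dst i e * h i) = 0) by (rewrite rsum_Binc in HBh; auto; lra).
    unfold h. rewrite (rsum_ext n _ (fun i => Binc src dst i e * f i - Binc src dst i e
                         * rsum l (fun e' => mmul l (Binc src dst) P i e' * (f (dst e') - f (src e')))))
      by (intros; ring).
    rewrite rsum_minus, rsum_Binc, rsum_Binc_Binc_pinv by auto. ring. }
  assert (Hsum : INR n * h 0%nat = rsum n f).
  { rewrite <- rsum_const, <- (rsum_ext n h _ (connected_edge_invariant h Hedge_h)).
    unfold h. rewrite rsum_minus, rsum_Binc_pinv_mul. ring. }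
  assert (Hn : INR n > 0) by (apply lt_0_INR; lia).
  assert (Hhi : h i = / INR n * rsum n f)
    by (rewrite (connected_edge_invariant h Hedge_h i Hi), <- Hsum; field; lra).
  unfold h in Hhi. lra.
Qed.

Lemma dev_mean_abs_le f c i : (i < n)%nat ->
  (forall e, (e < l)%nat -> Rabs (f (dst e) - f (src e)) <= c) ->
  Rabs (f i - / INR n * rsum n f) <= c * rsum l (fun e => Rabs (mmul l (Binc src dst) P i e)).
Proof.
  intros Hi Hf. rewrite dev_mean_Binc_pinv by auto.
  eapply Rle_trans; [apply rsum_abs|]. rewrite <- rsum_scal. apply rsum_le. intros e He.
  rewrite Rabs_mult. specialize (Hf e He). pose proof (Rabs_pos (mmul l (Binc src dst) P i e)). nra.
Qed.

Definition ideal_gain (c : R) : R := c * rsum l (fun a => rsum l (fun e => Rabs (P a e))).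

Lemma rsum_mul_dev_mean_le (y f : nat -> R) c :
  (forall e, (e < l)%nat -> Rabs (f (dst e) - f (src e)) <= c) ->
  rsum n (fun i => y i * (f i - / INR n * rsum n f))
  <= ideal_gain c * rsum l (fun e => Rabs (y (dst e) - y (src e))).
Proof.
  intros Hf. set (M := mmul l (Binc src dst) P).
  set (g := fun e => f (dst e) - f (src e)). set (xi := fun e => y (dst e) - y (src e)).
  assert (Hpair : rsum n (fun i => y i * (f i - / INR n * rsum n f))
                  = rsum l (fun a => xi a * rsum l (fun e => P a e * g e))).
  { rewrite (rsum_ext n _
      (fun i => y i * rsum l (fun a => Binc src dst i a * rsum l (fun e => P a e * g e)))).
    - rewrite rsum_Binc_adjoint. apply rsum_ext; intros; unfold xi; ring.
    - intros i Hi. rewrite dev_mean_Binc_pinv by auto. f_equal. unfold mmul.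
      rewrite (rsum_ext l _ (fun e => rsum l (fun a => Binc src dst i a * P a e * g e)))
        by (intros; symmetry; apply rsum_scalr).
      rewrite rsum_swap. apply rsum_ext. intros a _. rewrite <- rsum_scal. apply rsum_ext; intros; ring. }
  rewrite Hpair. apply Rle_trans with (rsum l (fun a => ideal_gain c * Rabs (xi a)));
    [|rewrite rsum_scal; apply Rle_refl].
  apply rsum_le. intros a Ha.
  assert (Hc : 0 <= c) by (pose proof (Hf a Ha); pose proof (Rabs_pos (g a)); unfold g in *; lra).
  assert (Hrow : Rabs (rsum l (fun e => P a e * g e)) <= ideal_gain c).
  { unfold ideal_gain. eapply Rle_trans; [apply rsum_abs|].
    apply Rle_trans with (c * rsum l (fun e => Rabs (P a e))).
    - rewrite <- rsum_scal. apply rsum_le. intros e He. rewrite Rabs_mult.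
      pose proof (Hf e He) as Hge. pose proof (Rabs_pos (P a e)). fold (g e) in Hge. nra.
    - apply Rmult_le_compat_l; auto. apply (rsum_term_le l (fun b => rsum l (fun e => Rabs (P b e)))); auto.
      intros; apply rsum_nonneg; intros; apply Rabs_pos. }
  eapply Rle_trans; [apply Rle_abs|]. rewrite Rabs_mult. rewrite Rmult_comm.
  apply Rmult_le_compat_r; [apply Rabs_pos|exact Hrow].
Qed.

Lemma lyap_slice_deriv_le gam c (beta X XH F K : nat -> R) m :
  (forall e, (e < l)%nat -> Rabs (F (dst e) - F (src e)) <= c) ->
  (forall i, (i < n)%nat -> c * rsum l (fun e => Rabs (mmul l (Binc src dst) P i e)) <= beta i) ->
  let w i := rsum l (fun e => Binc src dst i e * K e * sgn (XH (dst e) - XH (src e))) in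
  rsum n (fun i => (X i - m) * (- gam * (X i - m) + (F i - / INR n * rsum n F) - w i))
  + rsum l (fun e => (K e - ideal_gain c) * Rabs (XH (dst e) - XH (src e)))
  <= - gam * rsum n (fun i => (X i - m) * (X i - m))
     + rsum n (fun i => beta i * Rabs (X i - XH i) - w i * (X i - XH i)).
Proof.
  intros HF Hbeta w.
  set (d := fun i => F i - / INR n * rsum n F).
  set (xi := fun e => XH (dst e) - XH (src e)).
  assert (Hd0 : rsum n d = 0).
  { unfold d. rewrite rsum_minus, rsum_const.
    destruct n as [|n']; [simpl; ring|].
    assert (INR (S n') > 0) by (apply lt_0_INR; lia). field. lra. }
  assert (Hw : forall i, w i = rsum l (fun e => Binc src dst i e * (K e * sgn (xi e))))
    by (intros; apply rsum_ext; intros; unfold xi; ring).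
  assert (Hw0 : rsum n w = 0)
    by (rewrite (rsum_ext n w _ (fun i _ => Hw i)); apply rsum_Binc_combination).
  assert (HXHw : rsum n (fun i => XH i * w i) = rsum l (fun e => K e * Rabs (xi e))).
  { rewrite (rsum_ext n _ (fun i => XH i * rsum l (fun e => Binc src dst i e * (K e * sgn (xi e)))))
      by (intros; rewrite Hw; reflexivity).
    rewrite rsum_Binc_adjoint. apply rsum_ext. intros e _. fold (xi e). rewrite <- sgn_mul_self. ring. }
  assert (HXHd : rsum n (fun i => XH i * d i) <= ideal_gain c * rsum l (fun e => Rabs (xi e)))
    by (apply rsum_mul_dev_mean_le; auto).
  assert (Herr : rsum n (fun i => (X i - XH i) * d i) <= rsum n (fun i => beta i * Rabs (X i - XH i))).
  { apply rsum_le. intros i Hi. eapply Rle_trans; [apply Rle_abs|].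
    rewrite Rabs_mult, (Rmult_comm (beta i)). apply Rmult_le_compat_l; [apply Rabs_pos|].
    eapply Rle_trans; [apply dev_mean_abs_le|]; eauto. }
  assert (Hsplit : rsum n (fun i => (X i - m) * (- gam * (X i - m) + d i - w i))
    = - gam * rsum n (fun i => (X i - m) * (X i - m)) + rsum n (fun i => XH i * d i)
      + rsum n (fun i => (X i - XH i) * d i) - m * rsum n d - rsum n (fun i => XH i * w i)
      - rsum n (fun i => (X i - XH i) * w i) + m * rsum n w).
  { rewrite <- !rsum_scal. repeat (rewrite <- rsum_plus || rewrite <- rsum_minus).
    apply rsum_ext; intros; ring. }
  assert (Hgain : rsum l (fun e => (K e - ideal_gain c) * Rabs (xi e))
    = rsum l (fun e => K e * Rabs (xi e)) - ideal_gain c * rsum l (fun e => Rabs (xi e))).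
  { rewrite <- rsum_scal, <- rsum_minus. apply rsum_ext; intros; ring. }
  assert (Hwerr : rsum n (fun i => beta i * Rabs (X i - XH i) - w i * (X i - XH i))
    = rsum n (fun i => beta i * Rabs (X i - XH i)) - rsum n (fun i => (X i - XH i) * w i)).
  { rewrite <- rsum_minus. apply rsum_ext; intros; ring. }
  unfold d, xi in *. rewrite Hsplit, Hgain, Hwerr, Hd0, Hw0, HXHw. lra.
Qed.

End Incidence.

Lemma rderiv_lim F t d :
  rderiv F t d <-> limit1_in (fun h => (F (t + h) - F t) / h) (fun h => 0 < h) d 0.
Proof.
  unfold rderiv, limit1_in, limit_in; simpl; unfold R_dist. split.
  - intros H eps He. destruct (H eps He) as [del [Hd Hh]]. exists del. split; auto.
    intros x [Hx Hx2]. rewrite Rminus_0_r, Rabs_pos_eq in Hx2 by lra. apply Hh; lra.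
  - intros H eps He. destruct (H eps He) as [del [Hd Hh]]. exists del. split; auto.
    intros h Hh'. apply Hh. split; [lra|]. rewrite Rminus_0_r, Rabs_pos_eq by lra. lra.
Qed.

Lemma limit1_in_ext f g D l x0 :
  (forall x, D x -> f x = g x) -> limit1_in f D l x0 -> limit1_in g D l x0.
Proof.
  unfold limit1_in, limit_in. intros E H eps He. destruct (H eps He) as [a [Ha Hx]].
  exists a; split; auto. intros x [Dx Hd]. rewrite <- E by auto. apply Hx; auto.
Qed.

Lemma rderiv_ext F G t d d' : (forall u, F u = G u) -> d = d' -> rderiv F t d -> rderiv G t d'.
Proof.
  intros E <- H eps He. destruct (H eps He) as [del [Hd Hh]].
  exists del; split; auto. intros; rewrite <- !E; auto.
Qed.

Lemma rderiv_const c t : rderiv (fun _ => c) t 0.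
Proof.
  intros eps He. exists 1. split; [lra|]. intros h Hh.
  replace ((c - c) / h - 0) with 0 by (field; lra). rewrite Rabs_R0; lra.
Qed.

Lemma rderiv_plus F G t a b :
  rderiv F t a -> rderiv G t b -> rderiv (fun u => F u + G u) t (a + b).
Proof.
  rewrite !rderiv_lim. intros H1 H2.
  eapply limit1_in_ext; [|apply (limit_plus _ _ _ _ _ _ H1 H2)].
  intros x Hx; simpl in *; field; lra.
Qed.

Lemma rderiv_opp F t a : rderiv F t a -> rderiv (fun u => - F u) t (- a).
Proof.
  rewrite !rderiv_lim. intros H1.
  eapply limit1_in_ext; [|apply (limit_Ropp _ _ _ _ H1)].
  intros x Hx; simpl in *; field; lra.
Qed.

Lemma rderiv_minus F G t a b :
  rderiv F t a -> rderiv G t b -> rderiv (fun u => F u - G u) t (a - b).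
Proof.
  intros. apply (rderiv_ext (fun u => F u + - G u) _ _ (a + - b)); try (intros; ring).
  apply rderiv_plus; auto. apply rderiv_opp; auto.
Qed.

Lemma rderiv_mult F G t a b :
  rderiv F t a -> rderiv G t b -> rderiv (fun u => F u * G u) t (a * G t + F t * b).
Proof.
  rewrite !rderiv_lim. intros H1 H2.
  assert (HG : limit1_in (fun h => G t + h * ((G (t + h) - G t) / h)) (fun h => 0 < h) (G t + 0 * b) 0).
  { apply limit_plus; [apply limit_free|]. apply limit_mul; auto.
    intros eps He. exists eps; split; auto. intros x [_ Hx]. exact Hx. }
  replace (G t + 0 * b) with (G t) in HG by ring.
  pose proof (limit_mul _ _ _ _ _ _ H1 HG) as H3.
  pose proof (limit_mul _ _ _ _ _ _ (limit_free (fun _ => F t) (fun h => 0 < h) 0 0) H2) as H4.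
  eapply limit1_in_ext; [|apply (limit_plus _ _ _ _ _ _ H3 H4)].
  intros x Hx; simpl in *; field; lra.
Qed.

Lemma rderiv_scal c F t a : rderiv F t a -> rderiv (fun u => c * F u) t (c * a).
Proof.
  intros H. eapply rderiv_ext; [| |apply (rderiv_mult (fun _ => c) F t 0 a (rderiv_const c t) H)];
    intros; simpl; ring.
Qed.

Lemma rderiv_id t : rderiv (fun u => u) t 1.
Proof.
  intros eps He. exists 1. split; [lra|]. intros h Hh.
  replace ((t + h - t) / h - 1) with 0 by (field; lra). rewrite Rabs_R0; lra.
Qed.

Lemma rderiv_half_sq F t a : rderiv F t a -> rderiv (fun u => / 2 * (F u * F u)) t (F t * a).
Proof.
  intros H. eapply rderiv_ext; [| |apply (rderiv_scal (/ 2) _ _ _ (rderiv_mult _ _ _ _ _ H H))];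
    intros; simpl; field.
Qed.

Lemma rderiv_rsum N (F : nat -> R -> R) d t :
  (forall j, (j < N)%nat -> rderiv (F j) t (d j)) ->
  rderiv (fun u => rsum N (fun j => F j u)) t (rsum N d).
Proof.
  induction N; intros H; simpl; [apply rderiv_const|].
  apply rderiv_plus; [apply IHN; intros; apply H|apply H]; lia.
Qed.

Lemma rderiv_of_derivable_pt_lim f t l : derivable_pt_lim f t l -> rderiv f t l.
Proof.
  intros H eps He. destruct (H eps He) as [del Hd]. exists del. split; [apply cond_pos|].
  intros h Hh. apply Hd; [lra|]. rewrite Rabs_pos_eq; lra.
Qed.

Lemma rderiv_right_cont F t d : rderiv F t d ->
  forall eps, 0 < eps -> exists del, 0 < del /\ forall u, t <= u < t + del -> Rabs (F u - F t) < eps.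
Proof.
  intros H eps He. destruct (H 1 ltac:(lra)) as [del [Hd Hh]].
  assert (Hpos : 0 < Rabs d + 2) by (pose proof (Rabs_pos d); lra).
  exists (Rmin del (eps / (Rabs d + 2))). split; [apply Rmin_pos; auto; apply Rdiv_lt_0_compat; lra|].
  intros u Hu. destruct (Req_dec u t) as [->|Hne].
  { unfold Rminus. rewrite Rplus_opp_r, Rabs_R0; lra. }
  set (h := u - t).
  assert (Hh0 : 0 < h < del) by (unfold h; pose proof (Rmin_l del (eps / (Rabs d + 2))); lra).
  assert (Hheps : h * (Rabs d + 2) < eps).
  { pose proof (Rmin_r del (eps / (Rabs d + 2))).
    apply (Rmult_lt_reg_r (/ (Rabs d + 2))); [apply Rinv_0_lt_compat; lra|].
    rewrite Rmult_assoc, Rinv_r by lra. unfold h, Rdiv in *. lra. }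
  pose proof (Hh h Hh0) as Hq. replace (t + h) with u in Hq by (unfold h; ring).
  assert (Hslope : Rabs ((F u - F t) / h) < Rabs d + 1).
  { pose proof (Rabs_triang ((F u - F t) / h - d) d) as Htri.
    replace ((F u - F t) / h - d + d) with ((F u - F t) / h) in Htri by ring. lra. }
  replace (F u - F t) with (h * ((F u - F t) / h)) by (field; lra).
  rewrite Rabs_mult, (Rabs_pos_eq h) by lra.
  pose proof (Rabs_pos ((F u - F t) / h)). nra.
Qed.

Lemma continuity_pt_eps f t : continuity_pt f t ->
  forall eps, 0 < eps -> exists del, 0 < del /\ forall u, Rabs (u - t) < del -> Rabs (f u - f t) < eps.
Proof.
  unfold continuity_pt, continue_in, limit1_in, limit_in, D_x, no_cond; simpl; unfold R_dist.
  intros H eps He. destruct (H eps He) as [a [Ha Hx]]. exists a; split; auto. intros u Hu.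
  destruct (Req_dec t u) as [->|Hne]; [unfold Rminus; rewrite Rplus_opp_r, Rabs_R0; lra|].
  apply Hx; auto.
Qed.

Lemma continuity_pt_rsum N (F : nat -> R -> R) t :
  (forall j, (j < N)%nat -> continuity_pt (F j) t) ->
  continuity_pt (fun u => rsum N (fun j => F j u)) t.
Proof.
  induction N; intros H; simpl.
  - apply continuity_pt_const. intros ? ?; reflexivity.
  - apply continuity_pt_plus; [apply IHN; intros; apply H|apply H]; lia.
Qed.

Lemma rderiv_right_slope_le F t d eps : rderiv F t d -> 0 < eps ->
  exists del, 0 < del /\ forall u, t < u < t + del -> F u - F t <= (d + eps) * (u - t).
Proof.
  intros H He. destruct (H eps He) as [del [Hdel Hq]]. exists del. split; auto.
  intros u Hu. pose proof (Hq (u - t) ltac:(lra)) as Hut.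
  replace (t + (u - t)) with u in Hut by ring.
  pose proof (Rle_abs ((F u - F t) / (u - t) - d)).
  replace (F u - F t) with ((u - t) * ((F u - F t) / (u - t))) by (field; lra).
  rewrite (Rmult_comm (d + eps)). apply Rmult_le_compat_l; lra.
Qed.

Lemma continuity_pt_le_left F G a s : a < s -> continuity_pt F s -> continuity_pt G s ->
  (forall u, a <= u < s -> F u <= G u) -> F s <= G s.
Proof.
  intros Has HF HG Hle. apply Rnot_lt_le. intro Hgt.
  set (eps := (F s - G s) / 2).
  destruct (continuity_pt_eps F s HF eps ltac:(unfold eps; lra)) as [d1 [Hd1 H1]].
  destruct (continuity_pt_eps G s HG eps ltac:(unfold eps; lra)) as [d2 [Hd2 H2]].
  set (u := Rmax a (s - Rmin d1 d2 / 2)).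
  assert (Hmin : 0 < Rmin d1 d2) by (apply Rmin_pos; auto).
  assert (Hu : a <= u < s) by (unfold u; split; [apply Rmax_l|apply Rmax_lub_lt; lra]).
  assert (Hdist : Rabs (u - s) < Rmin d1 d2).
  { rewrite Rabs_left by lra. unfold u. pose proof (Rmax_r a (s - Rmin d1 d2 / 2)). lra. }
  pose proof (H1 u ltac:(pose proof (Rmin_l d1 d2); lra)).
  pose proof (H2 u ltac:(pose proof (Rmin_r d1 d2); lra)).
  pose proof (Hle u Hu). pose proof (Rle_abs (- (F u - F s))). pose proof (Rle_abs (G u - G s)).
  rewrite Rabs_Ropp in *. unfold eps in *. lra.
Qed.

(* The supremum [s] of the times up to which [F] stays below the line of slope [eps]
   through [F a + eps] cannot be < b: the right derivative at [s] would push the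
   bound past [s]. *)
Lemma rderiv_nonpos_le_eps F d a b eps : a <= b -> 0 < eps ->
  (forall t, a <= t < b -> rderiv F t (d t)) ->
  (forall t, a <= t < b -> d t <= 0) ->
  (forall t, a < t <= b -> continuity_pt F t) ->
  F b <= F a + eps * (b - a) + eps.
Proof.
  intros Hab He Hd Hneg Hc.
  set (bd := fun u => F a + eps * (u - a) + eps).
  set (E := fun s => a <= s <= b /\ forall u, a <= u <= s -> F u <= bd u).
  assert (HEa : E a). { split; [lra|]. intros u Hu. replace u with a by lra. unfold bd; lra. }
  assert (Hbound : bound E) by (exists b; intros s [Hs _]; lra).
  destruct (completeness E Hbound (ex_intro _ a HEa)) as [s [Hub Hlub]].
  assert (Has : a <= s) by (apply Hub; auto).
  assert (Hsb : s <= b) by (apply Hlub; intros s' [Hs _]; lra).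
  assert (Hbefore : forall u, a <= u < s -> F u <= bd u).
  { intros u Hu. destruct (classic (exists s', E s' /\ u < s')) as [[s' [[_ Hs'] Hus]]|Hn].
    - apply Hs'; lra.
    - exfalso. assert (s <= u); [|lra]. apply Hlub. intros s' Hs'.
      apply Rnot_lt_le. intro. apply Hn. eauto. }
  assert (Hupto : forall u, a <= u <= s -> F u <= bd u).
  { intros u Hu. destruct (Req_dec u s) as [->|]; [|apply Hbefore; lra].
    destruct (Req_dec s a) as [->|Hsa]; [unfold bd; lra|].
    apply (continuity_pt_le_left F bd a s); [lra|apply Hc; lra| |auto].
    unfold bd. reg. }
  destruct (Req_dec s b) as [<-|Hneq]; [apply Hupto; lra|].
  exfalso.
  destruct (rderiv_right_slope_le F s (d s) (eps / 2) (Hd s ltac:(lra)) ltac:(lra)) as [del [Hdel Hsl]].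
  pose proof (Hneg s ltac:(lra)).
  set (h := Rmin del (b - s) / 2).
  assert (Hh : 0 < h < del /\ s + h <= b).
  { unfold h. pose proof (Rmin_l del (b - s)). pose proof (Rmin_r del (b - s)).
    assert (0 < Rmin del (b - s)) by (apply Rmin_pos; lra). lra. }
  assert (Hlater : E (s + h)).
  { split; [lra|]. intros u Hu. destruct (Rle_dec u s); [apply Hupto; lra|].
    pose proof (Hsl u ltac:(lra)). pose proof (Hupto s ltac:(lra)). unfold bd in *. nra. }
  pose proof (Hub _ Hlater). lra.
Qed.

Lemma nonincreasing_of_rderiv_nonpos F d a b : a <= b ->
  (forall t, a <= t < b -> rderiv F t (d t)) ->
  (forall t, a <= t < b -> d t <= 0) ->
  (forall t, a < t <= b -> continuity_pt F t) ->
  F b <= F a.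
Proof.
  intros Hab Hd Hn Hc. apply Rnot_lt_le. intro Hlt.
  set (eps := (F b - F a) / (2 * (b - a + 1))).
  assert (Heps : 0 < eps) by (unfold eps; apply Rdiv_lt_0_compat; lra).
  pose proof (rderiv_nonpos_le_eps F d a b eps Hab Heps Hd Hn Hc).
  assert (eps * (b - a + 1) * 2 = F b - F a) by (unfold eps; field; lra). nra.
Qed.

Lemma nondecreasing_of_rderiv_nonneg F d a b : a <= b ->
  (forall t, a <= t < b -> rderiv F t (d t)) ->
  (forall t, a <= t < b -> 0 <= d t) ->
  (forall t, a < t <= b -> continuity_pt F t) ->
  F a <= F b.
Proof.
  intros Hab Hd Hn Hc.
  enough (- F b <= - F a) by lra.
  apply (nonincreasing_of_rderiv_nonpos (fun u => - F u) (fun u => - d u) a b Hab).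
  - intros; apply rderiv_opp; auto.
  - intros t Ht. pose proof (Hn t Ht); lra.
  - intros t Ht. apply (continuity_pt_opp F t (Hc t Ht)).
Qed.

Lemma lipschitz_of_rderiv_bounded F d a b L : a <= b ->
  (forall t, a <= t < b -> rderiv F t (d t)) ->
  (forall t, a <= t < b -> Rabs (d t) <= L) ->
  (forall t, a < t <= b -> continuity_pt F t) ->
  Rabs (F b - F a) <= L * (b - a).
Proof.
  intros Hab Hd HL Hc.
  assert (Hlin : forall t, continuity_pt (fun u => L * u) t)
    by (intros; apply continuity_pt_scal, derivable_continuous_pt, derivable_pt_id).
  assert (Hup : F b - L * b <= F a - L * a).
  { apply (nonincreasing_of_rderiv_nonpos (fun u => F u - L * u) (fun u => d u - L * 1) a b Hab).
    - intros; apply rderiv_minus; [auto|apply rderiv_scal, rderiv_id].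
    - intros t Ht. pose proof (HL t Ht). pose proof (Rle_abs (d t)). lra.
    - intros; apply continuity_pt_minus; auto. }
  assert (Hdown : - F b - L * b <= - F a - L * a).
  { apply (nonincreasing_of_rderiv_nonpos (fun u => - F u - L * u) (fun u => - d u - L * 1) a b Hab).
    - intros; apply rderiv_minus; [apply rderiv_opp; auto|apply rderiv_scal, rderiv_id].
    - intros t Ht. pose proof (HL t Ht). pose proof (Rle_abs (- d t)) as Hm. rewrite Rabs_Ropp in Hm. lra.
    - intros; apply continuity_pt_minus; [apply continuity_pt_opp|]; auto. }
  apply Rabs_le. lra.
Qed.

(* At the last time [s] where [E >= 0], continuity gives [E s = 0], so [E' >= 0] on
   [[s, t]] and [E] cannot have become negative. *)
Lemma nonneg_of_rderiv_nonneg_at_nonpos (E D : R -> R) t0 : 0 < E t0 ->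
  (forall t, t0 <= t -> rderiv E t (D t)) ->
  (forall t, t0 < t -> continuity_pt E t) ->
  (forall t, t0 <= t -> E t <= 0 -> 0 <= D t) ->
  forall t, t0 <= t -> 0 <= E t.
Proof.
  intros H0 Hd Hc Hsg t1 Ht1. apply Rnot_lt_le. intro Hneg.
  set (S := fun s => t0 <= s <= t1 /\ 0 <= E s).
  assert (HS0 : S t0) by (split; lra).
  assert (Hb : bound S) by (exists t1; intros s [Hs _]; lra).
  destruct (completeness S Hb (ex_intro _ t0 HS0)) as [s [Hub Hlub]].
  assert (Hs0 : t0 <= s) by (apply Hub; auto).
  assert (Hs1 : s <= t1) by (apply Hlub; intros s' [Hs _]; lra).
  assert (Hafter : forall u, s < u <= t1 -> E u < 0).
  { intros u Hu. apply Rnot_le_lt. intro. assert (u <= s) by (apply Hub; split; [lra|auto]). lra. }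
  assert (Hges : 0 <= E s).
  { destruct (Req_dec s t0) as [->|Hne]; [lra|].
    apply Rnot_lt_le. intro Hlt.
    destruct (continuity_pt_eps E s (Hc s ltac:(lra)) (- E s) ltac:(lra)) as [del [Hdel Hx]].
    destruct (classic (exists s', S s' /\ s - del < s')) as [[s' [[Hs1' Hs2'] Hs3']]|Hn].
    - assert (s' <= s) by (apply Hub; split; auto).
      assert (Hclose : Rabs (s' - s) < del) by (apply Rabs_def1; lra).
      pose proof (Hx s' Hclose). pose proof (Rle_abs (E s' - E s)). lra.
    - assert (s <= s - del); [|lra]. apply Hlub. intros s' Hs'.
      apply Rnot_lt_le. intro. apply Hn; eauto. }
  assert (Hst : s < t1) by (destruct (Req_dec s t1); [subst; lra|lra]).
  assert (Hles : E s <= 0).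
  { apply Rnot_lt_le. intro Hpos.
    destruct (rderiv_right_cont E s (D s) (Hd s Hs0) (E s) Hpos) as [del [Hdel Hx]].
    set (u := Rmin (s + del / 2) t1).
    assert (Hu : s < u <= t1) by (unfold u; split; [apply Rmin_glb_lt; lra|apply Rmin_r]).
    assert (u < s + del) by (unfold u; pose proof (Rmin_l (s + del / 2) t1); lra).
    pose proof (Hx u ltac:(lra)). pose proof (Hafter u Hu).
    pose proof (Rle_abs (- (E u - E s))) as Hm. rewrite Rabs_Ropp in Hm. lra. }
  assert (E s <= E t1).
  { apply (nondecreasing_of_rderiv_nonneg E D s t1); [lra| | |].
    - intros; apply Hd; lra.
    - intros t Ht. apply Hsg; [lra|].
      destruct (Req_dec t s) as [->|]; [auto|left; apply Hafter; lra].
    - intros; apply Hc; lra. }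
  lra.
Qed.

Lemma lyapunov_drop (V DV y : R -> R) t0 gam c a b :
  (forall t, t0 <= t -> rderiv V t (DV t)) ->
  (forall t, t0 < t -> continuity_pt V t) ->
  (forall t, t0 <= t -> DV t <= - gam * (y t * y t)) ->
  0 <= gam -> t0 <= a <= b ->
  (forall u, a <= u <= b -> c <= y u * y u) ->
  V b + gam * c * (b - a) <= V a.
Proof.
  intros HV HVc HDV Hgam Hab Hc.
  enough (V b + gam * c * b <= V a + gam * c * a) by lra.
  apply (nonincreasing_of_rderiv_nonpos (fun u => V u + gam * c * u)
           (fun u => DV u + gam * c * 1) a b); [lra| | |].
  - intros; apply rderiv_plus; [apply HV; lra|apply rderiv_scal, rderiv_id].
  - intros t Ht. pose proof (HDV t ltac:(lra)). pose proof (Hc t ltac:(lra)). nra.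
  - intros; apply continuity_pt_plus; [apply HVc; lra|].
    apply continuity_pt_scal, derivable_continuous_pt, derivable_pt_id.
Qed.

Lemma lyapunov_drop_of_lipschitz (V DV y : R -> R) t0 gam L eps t h :
  (forall t, t0 <= t -> rderiv V t (DV t)) ->
  (forall t, t0 < t -> continuity_pt V t) ->
  (forall t, t0 <= t -> DV t <= - gam * (y t * y t)) ->
  (forall a b, t0 <= a <= b -> Rabs (y b - y a) <= L * (b - a)) ->
  0 <= gam -> 0 <= eps -> t0 <= t -> 0 <= h -> L * h <= eps / 2 -> eps <= Rabs (y t) ->
  V (t + h) + gam * (eps * eps / 4) * h <= V t.
Proof.
  intros HV HVc HDV Hlip Hgam Heps Ht Hh HLh Hy.
  replace h with (t + h - t) at 2 by ring.
  apply (lyapunov_drop V DV y t0); auto; try lra.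
  intros u Hu. pose proof (Hlip t u ltac:(lra)) as Hyu.
  assert (HL : 0 <= L).
  { pose proof (Hlip t (t + 1) ltac:(lra)). pose proof (Rabs_pos (y (t + 1) - y t)). lra. }
  pose proof (Rabs_triang_inv (y t) (y u)). rewrite Rabs_minus_sym in Hyu.
  assert (Hhalf : eps / 2 <= Rabs (y u)) by nra.
  rewrite <- (Rabs_pos_eq (y u * y u)) by nra. rewrite Rabs_mult. nra.
Qed.

(* Barbalat-type argument: each time [|y| >= eps], the Lipschitz bound keeps
   [|y| >= eps/2] for a fixed duration [h], which costs [V] a fixed amount; since
   [V >= 0] this can happen only finitely often. *)
Lemma vanishes_of_lyapunov (V DV y : R -> R) t0 gam L :
  0 < gam ->
  (forall t, t0 <= t -> rderiv V t (DV t)) ->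
  (forall t, t0 < t -> continuity_pt V t) ->
  (forall t, t0 <= t -> DV t <= - gam * (y t * y t)) ->
  (forall t, t0 <= t -> 0 <= V t) ->
  (forall a b, t0 <= a <= b -> Rabs (y b - y a) <= L * (b - a)) ->
  forall eps, 0 < eps -> exists T, forall t, T <= t -> Rabs (y t) < eps.
Proof.
  intros Hgam HV HVc HDV HV0 Hlip eps Heps.
  assert (HL : 0 <= L).
  { pose proof (Hlip t0 (t0 + 1) ltac:(lra)). pose proof (Rabs_pos (y (t0 + 1) - y t0)). lra. }
  assert (Hnoninc : forall a b, t0 <= a <= b -> V b <= V a).
  { intros a b Hab.
    enough (V b + gam * 0 * (b - a) <= V a) by lra.
    apply (lyapunov_drop V DV y t0); auto; [lra|]. intros; nra. }
  apply NNPP. intro Hno.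
  assert (Hoften : forall T, exists t, T <= t /\ eps <= Rabs (y t)).
  { intros T. apply NNPP. intro Hn. apply Hno. exists T. intros t Ht.
    apply Rnot_le_lt. intro. apply Hn. eauto. }
  set (h := eps / (2 * (L + 1))).
  assert (Hh : 0 < h) by (unfold h; apply Rdiv_lt_0_compat; lra).
  assert (HLh : L * h <= eps / 2).
  { unfold h. replace (L * (eps / (2 * (L + 1)))) with (eps / 2 * (L / (L + 1))) by (field; lra).
    assert (L / (L + 1) <= 1) by (apply (Rmult_le_reg_r (L + 1)); [lra|]; unfold Rdiv;
                                  rewrite Rmult_assoc, Rinv_l; lra).
    nra. }
  set (drop := gam * (eps * eps / 4) * h).
  assert (Hdrop : 0 < drop) by (unfold drop; apply Rmult_lt_0_compat; [apply Rmult_lt_0_compat|]; nra).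
  assert (Hiter : forall N, exists t, t0 <= t /\ V t <= V t0 - INR N * drop).
  { induction N as [|N [t [Ht HVt]]].
    - exists t0. simpl. lra.
    - destruct (Hoften t) as [t' [Htt' Hy]]. exists (t' + h). split; [lra|].
      pose proof (lyapunov_drop_of_lipschitz V DV y t0 gam L eps t' h HV HVc HDV Hlip
                    ltac:(lra) ltac:(lra) ltac:(lra) ltac:(lra) HLh Hy).
      pose proof (Hnoninc t t' ltac:(lra)). rewrite S_INR. unfold drop in *. lra. }
  destruct (INR_unbounded (V t0 / drop)) as [N HN].
  destruct (Hiter N) as [t [Ht HVt]].
  pose proof (HV0 t Ht).
  assert (INR N * drop > V t0).
  { apply (Rmult_gt_compat_r drop) in HN; auto.
    replace (V t0 / drop * drop) with (V t0) in HN by (field; lra). lra. }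
  lra.
Qed.

Lemma abs_le_of_half_sq_le y W : / 2 * (y * y) <= W -> Rabs y <= 1 + 2 * W.
Proof.
  intros H. destruct (Rle_dec (Rabs y) 1); [nra|].
  assert (Rabs y * Rabs y = y * y) by (rewrite <- Rabs_mult; apply Rabs_pos_eq; nra). nra.
Qed.

Lemma half_sq_nonneg y : 0 <= / 2 * (y * y).
Proof. nra. Qed.

Section Estimator.

Variables (n r l : nat) (src dst : nat -> nat).
Hypothesis Hgraph : undirected_edge_list n l src dst.
Hypothesis Hconn : connected n l src dst.
Variables phi dphi : nat -> nat -> R -> R.
Hypothesis Hphi : forall i k t, (i < n)%nat -> (k < r)%nat -> derivable_pt_lim (phi i k) t (dphi i k t).
Variables varphi dvarphi : R.
Hypothesis HA2 : forall t, 0 <= t -> forall e k, (e < l)%nat -> (k < r)%nat ->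
  Rabs (phi (dst e) k t - phi (src e) k t) <= varphi /\
  Rabs (dphi (dst e) k t - dphi (src e) k t) <= dvarphi.
Variable gamma : R.
Hypothesis Hgamma : 0 < gamma.
Variable P : nat -> nat -> R.
Hypothesis HP : is_pinv l l (mmul n (mtr (Binc src dst)) (Binc src dst)) P.
Variable beta : nat -> R.
Hypothesis HA3 : forall i, (i < n)%nat ->
  (gamma * varphi + dvarphi) * infnorm (n * r) (l * r) (kronI r (mmul l (Binc src dst) P)) <= beta i.
Variables alpha delta theta : nat -> R.
Hypothesis Halpha : forall i, (i < n)%nat -> 0 < alpha i.
Hypothesis Hdelta : forall i, (i < n)%nat -> 1 <= delta i.
Hypothesis Htheta : forall i, (i < n)%nat -> 0 < theta i < 1.
Variable t0 : R.
Hypothesis Ht0 : 0 <= t0.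
Variables (z kappa : nat -> nat -> R -> R) (eta : nat -> R -> R) (trig : nat -> R -> Prop)
  (xhat : nat -> nat -> R -> R).
Hypothesis Hz_cont : forall i k t, (i < n)%nat -> (k < r)%nat -> t0 < t -> continuity_pt (z i k) t.
Hypothesis Hz : forall i k t, (i < n)%nat -> (k < r)%nat -> t0 <= t ->
  rderiv (z i k) t (- gamma * z i k t - w_sig l src dst kappa xhat i k t).
Hypothesis Hk_cont : forall e k t, (e < l)%nat -> (k < r)%nat -> t0 < t -> continuity_pt (kappa e k) t.
Hypothesis Hk : forall e k t, (e < l)%nat -> (k < r)%nat -> t0 <= t ->
  rderiv (kappa e k) t (Rabs (xi_hat src dst xhat e k t)).
Hypothesis Heta_cont : forall i t, (i < n)%nat -> t0 < t -> continuity_pt (eta i) t.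
Hypothesis Heta : forall i t, (i < n)%nat -> t0 <= t ->
  rderiv (eta i) t
    (- alpha i * eta i t
     - delta i * (beta i * rsum r (fun k => Rabs (z i k t + phi i k t - xhat i k t))
                  - rsum r (fun k => w_sig l src dst kappa xhat i k t
                                     * (z i k t + phi i k t - xhat i k t)))).
Hypothesis Heta0 : forall i, (i < n)%nat -> 0 < eta i t0.
Hypothesis Hxhat : forall i t, (i < n)%nat -> t0 <= t ->
  exists s, trig i s /\ s <= t /\ (forall u, s < u <= t -> ~ trig i u) /\
    forall k, (k < r)%nat -> xhat i k t = z i k s + phi i k s.
Hypothesis Htrig_fire : forall i s t, (i < n)%nat -> trig i s -> s < t ->
  trig_cond r (theta i) (beta i) (fun k u => z i k u + phi i k u)
    (w_sig l src dst kappa xhat i) (eta i) s t ->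
  exists u, trig i u /\ s < u <= t.

(* [xt] is [x~] and [trig_fn i] is [beta_i 1^T |eps_i| - w_i^T eps_i]; [Dxt], [Deta], [DV]
   are the right derivatives of [xt], [eta], [V]; [kst] is [kappa_star]. *)
Let w i k u := w_sig l src dst kappa xhat i k u.
Let xt i k u := z i k u + phi i k u - / INR n * rsum n (fun j => phi j k u).
Let f i k u := gamma * phi i k u + dphi i k u.
Let cf := gamma * varphi + dvarphi.
Let kst := ideal_gain l P cf.
Let trig_fn i u := beta i * rsum r (fun k => Rabs (z i k u + phi i k u - xhat i k u))
             - rsum r (fun k => w i k u * (z i k u + phi i k u - xhat i k u)).
Let Deta i u := - alpha i * eta i u - delta i * trig_fn i u.
Let Dxt i k u := - gamma * xt i k u + (f i k u - / INR n * rsum n (fun j => f j k u)) - w i k u.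
Let V u := rsum r (fun k => rsum n (fun i => / 2 * (xt i k u * xt i k u)))
         + rsum r (fun k => rsum l (fun e => / 2 * ((kappa e k u - kst) * (kappa e k u - kst))))
         + rsum n (fun i => / delta i * eta i u).
Let DV u := rsum r (fun k => rsum n (fun i => xt i k u * Dxt i k u))
          + rsum r (fun k => rsum l (fun e => (kappa e k u - kst) * Rabs (xi_hat src dst xhat e k u)))
          + rsum n (fun i => / delta i * Deta i u).

Lemma f_edge_le e k t : (e < l)%nat -> (k < r)%nat -> t0 <= t ->
  Rabs (f (dst e) k t - f (src e) k t) <= cf.
Proof.
  intros He Hkr Ht. destruct (HA2 t ltac:(lra) e k He Hkr) as [Hp Hd]. unfold f, cf.
  replace (gamma * phi (dst e) k t + dphi (dst e) k t - (gamma * phi (src e) k t + dphi (src e) k t))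
    with (gamma * (phi (dst e) k t - phi (src e) k t) + (dphi (dst e) k t - dphi (src e) k t)) by ring.
  eapply Rle_trans; [apply Rabs_triang|]. rewrite Rabs_mult, (Rabs_pos_eq gamma) by lra. nra.
Qed.

Lemma beta_row_le : (0 < r)%nat -> forall i, (i < n)%nat ->
  cf * rsum l (fun e => Rabs (mmul l (Binc src dst) P i e)) <= beta i.
Proof.
  intros Hr i Hi. pose proof (HA3 i Hi) as Hb. fold cf in Hb.
  destruct (Nat.eq_dec l 0) as [Hl|Hl].
  - assert (Hmax0 : forall N, rmaxn N (fun _ => 0) = 0)
      by (induction N; simpl; auto; rewrite IHN; apply Rmax_left; lra).
    revert Hb. unfold infnorm. rewrite Hl. simpl. rewrite Hmax0. lra.
  - assert (Hcf : 0 <= cf).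
    { pose proof (f_edge_le 0 0 t0 ltac:(lia) Hr ltac:(lra)).
      pose proof (Rabs_pos (f (dst 0%nat) 0%nat t0 - f (src 0%nat) 0%nat t0)). lra. }
    eapply Rle_trans; [|exact Hb]. apply Rmult_le_compat_l; auto. apply infnorm_kronI_row; auto.
Qed.

Lemma trig_fn_zero_or_below i t : (i < n)%nat -> t0 <= t ->
  trig_fn i t = 0 \/ theta i * trig_fn i t < eta i t.
Proof.
  intros Hi Ht. destruct (Hxhat i t Hi Ht) as [s [Ts [Hst [Hquiet Hx]]]].
  destruct (Req_dec s t) as [<-|Hne].
  - left. unfold trig_fn.
    rewrite (rsum_ext r _ (fun _ => 0)), (rsum_ext r (fun k => w i k s * _) (fun _ => 0)).
    + rewrite rsum_zero; ring.
    + intros k Hkr. rewrite Hx by auto. ring.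
    + intros k Hkr. rewrite Hx by auto. unfold Rminus. rewrite Rplus_opp_r. apply Rabs_R0.
  - right. apply Rnot_le_lt. intro Hcond.
    destruct (Htrig_fire i s t Hi Ts ltac:(lra)) as [u [Tu Hu]]; [|exact (Hquiet u Hu Tu)].
    unfold trig_cond. apply Rle_ge. replace (trig_fn i t) with
      (beta i * rsum r (fun k => Rabs (z i k t + phi i k t - (z i k s + phi i k s)))
       - rsum r (fun k => w_sig l src dst kappa xhat i k t * (z i k t + phi i k t - (z i k s + phi i k s))))
      in Hcond; [exact Hcond|].
    unfold trig_fn, w. f_equal; [f_equal|]; apply rsum_ext; intros; rewrite Hx; auto.
Qed.

Lemma eta_nonneg i t : (i < n)%nat -> t0 <= t -> 0 <= eta i t.
Proof.
  intros Hi. apply (nonneg_of_rderiv_nonneg_at_nonpos (eta i) (Deta i) t0); auto.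
  intros s Hs Hle. pose proof (Halpha i Hi). pose proof (Hdelta i Hi). pose proof (Htheta i Hi).
  unfold Deta. destruct (trig_fn_zero_or_below i s Hi Hs) as [->|Hbelow]; [nra|].
  assert (trig_fn i s < 0) by (apply Rnot_le_lt; intro; nra). nra.
Qed.

Lemma xt_rderiv i k t : (i < n)%nat -> (k < r)%nat -> t0 <= t -> rderiv (xt i k) t (Dxt i k t).
Proof.
  intros Hi Hkr Ht.
  assert (Hphi' : forall j, (j < n)%nat -> rderiv (phi j k) t (dphi j k t))
    by (intros; apply rderiv_of_derivable_pt_lim, Hphi; auto).
  apply (rderiv_ext (fun u => z i k u + phi i k u - / INR n * rsum n (fun j => phi j k u)) _ _
           (- gamma * z i k t - w i k t + dphi i k t - / INR n * rsum n (fun j => dphi j k t)));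
    [reflexivity| |].
  - unfold Dxt, xt, f. rewrite rsum_plus, rsum_scal. ring.
  - apply rderiv_minus; [apply rderiv_plus; auto|].
    apply rderiv_scal, (rderiv_rsum n (fun j u => phi j k u)); auto.
Qed.

Lemma xt_cont i k t : (i < n)%nat -> (k < r)%nat -> t0 < t -> continuity_pt (xt i k) t.
Proof.
  intros Hi Hkr Ht.
  assert (Hphic : forall j, (j < n)%nat -> continuity_pt (phi j k) t)
    by (intros; apply derivable_continuous_pt; exists (dphi j k t); apply Hphi; auto).
  apply continuity_pt_minus; [apply continuity_pt_plus; auto|].
  apply continuity_pt_scal, (continuity_pt_rsum n (fun j u => phi j k u)); auto.
Qed.

Lemma V_rderiv t : t0 <= t -> rderiv V t (DV t).
Proof.
  intros Ht. apply rderiv_plus; [apply rderiv_plus|].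
  - apply rderiv_rsum. intros k Hkr. apply rderiv_rsum. intros i Hi.
    apply rderiv_half_sq, xt_rderiv; auto.
  - apply rderiv_rsum. intros k Hkr. apply rderiv_rsum. intros e He.
    apply (rderiv_ext (fun u => / 2 * ((kappa e k u - kst) * (kappa e k u - kst))) _ _
             ((kappa e k t - kst) * (Rabs (xi_hat src dst xhat e k t) - 0))); [reflexivity|ring|].
    apply (rderiv_half_sq (fun u => kappa e k u - kst)), rderiv_minus; [apply Hk; auto|apply rderiv_const].
  - apply rderiv_rsum. intros i Hi. apply rderiv_scal, Heta; auto.
Qed.

Lemma V_cont t : t0 < t -> continuity_pt V t.
Proof.
  intros Ht. assert (Hc : forall c, continuity_pt (fun _ : R => c) t)
    by (intros; apply continuity_pt_const; intros ? ?; reflexivity).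
  apply continuity_pt_plus; [apply continuity_pt_plus|]; apply continuity_pt_rsum; intros.
  - apply continuity_pt_rsum. intros.
    apply continuity_pt_mult; [auto|apply continuity_pt_mult; apply xt_cont; auto].
  - apply continuity_pt_rsum. intros.
    apply continuity_pt_mult; [auto|apply continuity_pt_mult; apply continuity_pt_minus; auto].
  - apply continuity_pt_mult; auto.
Qed.

(* Per coordinate, the slice inequality leaves the trigger functions [trig_fn i], which the
   [eta i / delta i] part of [V] cancels exactly. *)
Lemma DV_le t : (0 < r)%nat -> t0 <= t ->
  DV t <= - gamma * rsum r (fun k => rsum n (fun i => xt i k t * xt i k t)).
Proof.
  intros Hr Ht.
  assert (Hslice : forall k, (k < r)%nat ->
    rsum n (fun i => xt i k t * Dxt i k t)
    + rsum l (fun e => (kappa e k t - kst) * Rabs (xi_hat src dst xhat e k t))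
    <= - gamma * rsum n (fun i => xt i k t * xt i k t)
       + rsum n (fun i => beta i * Rabs (z i k t + phi i k t - xhat i k t)
                          - w i k t * (z i k t + phi i k t - xhat i k t))).
  { intros k Hkr.
    exact (lyap_slice_deriv_le n l src dst (proj1 Hgraph) P HP Hconn gamma cf beta
      (fun i => z i k t + phi i k t) (fun i => xhat i k t) (fun i => f i k t) (fun e => kappa e k t)
      (/ INR n * rsum n (fun j => phi j k t)) (fun e He => f_edge_le e k t He Hkr Ht) (beta_row_le Hr)). }
  assert (HS : rsum r (fun k => rsum n (fun i => beta i * Rabs (z i k t + phi i k t - xhat i k t)
                                                 - w i k t * (z i k t + phi i k t - xhat i k t)))
               = rsum n (fun i => trig_fn i t)).
  { rewrite rsum_swap. apply rsum_ext. intros i Hi. unfold trig_fn.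
    rewrite rsum_minus, rsum_scal. reflexivity. }
  assert (Heta_sum : rsum n (fun i => / delta i * Deta i t)
                     = - rsum n (fun i => alpha i * eta i t / delta i) - rsum n (fun i => trig_fn i t)).
  { rewrite (rsum_ext n _ (fun i => -1 * (alpha i * eta i t / delta i) - trig_fn i t)).
    - rewrite rsum_minus, rsum_scal. ring.
    - intros i Hi. pose proof (Hdelta i Hi). unfold Deta. field. lra. }
  assert (Hdiss : 0 <= rsum n (fun i => alpha i * eta i t / delta i)).
  { apply rsum_nonneg. intros i Hi. pose proof (Halpha i Hi). pose proof (Hdelta i Hi).
    pose proof (eta_nonneg i t Hi Ht). apply Rmult_le_pos; [nra|]. left; apply Rinv_0_lt_compat; lra. }
  assert (Hsum : rsum r (fun k => rsum n (fun i => xt i k t * Dxt i k t))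
                 + rsum r (fun k => rsum l (fun e => (kappa e k t - kst) * Rabs (xi_hat src dst xhat e k t)))
                 <= - gamma * rsum r (fun k => rsum n (fun i => xt i k t * xt i k t))
                    + rsum n (fun i => trig_fn i t)).
  { rewrite <- HS, <- rsum_scal, <- !rsum_plus. apply rsum_le. exact Hslice. }
  unfold DV. lra.
Qed.

Lemma V_terms_nonneg t : t0 <= t ->
  0 <= rsum r (fun k => rsum n (fun i => / 2 * (xt i k t * xt i k t))) /\
  0 <= rsum r (fun k => rsum l (fun e => / 2 * ((kappa e k t - kst) * (kappa e k t - kst)))) /\
  0 <= rsum n (fun i => / delta i * eta i t).
Proof.
  intros Ht.
  split; [|split]; [apply rsum_nonneg; intros; apply rsum_nonneg; intros; apply half_sq_nonneg..|].
  apply rsum_nonneg. intros i Hi. pose proof (Hdelta i Hi). pose proof (eta_nonneg i t Hi Ht).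
  apply Rmult_le_pos; [left; apply Rinv_0_lt_compat; lra|auto].
Qed.

Lemma V_nonneg t : t0 <= t -> 0 <= V t.
Proof. intros Ht. destruct (V_terms_nonneg t Ht) as (? & ? & ?). unfold V. lra. Qed.

Lemma V_le_init t : (0 < r)%nat -> t0 <= t -> V t <= V t0.
Proof.
  intros Hr Ht. apply (nonincreasing_of_rderiv_nonpos V DV t0 t Ht).
  - intros; apply V_rderiv; lra.
  - intros s Hs. eapply Rle_trans; [apply DV_le; auto; lra|].
    enough (0 <= rsum r (fun k => rsum n (fun i => xt i k s * xt i k s))) by nra.
    apply rsum_nonneg; intros; apply rsum_nonneg; intros; nra.
  - intros; apply V_cont; lra.
Qed.

Lemma xt_abs_le_init i k t : (i < n)%nat -> (k < r)%nat -> t0 <= t -> Rabs (xt i k t) <= 1 + 2 * V t0.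
Proof.
  intros Hi Hkr Ht. apply abs_le_of_half_sq_le.
  apply Rle_trans with (V t); [|apply V_le_init; auto; lia].
  destruct (V_terms_nonneg t Ht) as (? & ? & ?). unfold V.
  pose proof (rsum2_term_le r n (fun k i => / 2 * (xt i k t * xt i k t)) k i
                ltac:(intros; apply half_sq_nonneg) Hkr Hi)
    as Hterm.
  eapply Rle_trans; [exact Hterm|]. lra.
Qed.

Lemma kappa_abs_le_init e k t : (e < l)%nat -> (k < r)%nat -> t0 <= t ->
  Rabs (kappa e k t - kst) <= 1 + 2 * V t0.
Proof.
  intros He Hkr Ht. apply abs_le_of_half_sq_le.
  apply Rle_trans with (V t); [|apply V_le_init; auto; lia].
  destruct (V_terms_nonneg t Ht) as (? & ? & ?). unfold V.
  pose proof (rsum2_term_le r l (fun k e => / 2 * ((kappa e k t - kst) * (kappa e k t - kst))) k e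
                ltac:(intros; apply half_sq_nonneg) Hkr He) as Hterm.
  eapply Rle_trans; [exact Hterm|]. lra.
Qed.

Lemma w_abs_le i k t : (k < r)%nat -> t0 <= t -> Rabs (w i k t) <= INR l * (Rabs kst + 1 + 2 * V t0).
Proof.
  intros Hkr Ht. unfold w, w_sig. eapply Rle_trans; [apply rsum_abs|]. rewrite <- rsum_const.
  apply rsum_le. intros e He. rewrite !Rabs_mult.
  pose proof (kappa_abs_le_init e k t He Hkr Ht). pose proof (Rabs_triang_inv (kappa e k t) kst).
  pose proof (Binc_abs_le1 src dst i e). pose proof (sgn_abs_le1 (xi_hat src dst xhat e k t)).
  pose proof (Rabs_pos (Binc src dst i e)). pose proof (Rabs_pos (kappa e k t)).
  pose proof (Rabs_pos (sgn (xi_hat src dst xhat e k t))).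
  apply Rle_trans with (1 * Rabs (kappa e k t) * 1); [|lra].
  apply Rmult_le_compat; try nra.
Qed.

Lemma Dxt_abs_le i k t : (i < n)%nat -> (k < r)%nat -> t0 <= t ->
  Rabs (Dxt i k t) <= gamma * (1 + 2 * V t0) + beta i + INR l * (Rabs kst + 1 + 2 * V t0).
Proof.
  intros Hi Hkr Ht.
  pose proof (xt_abs_le_init i k t Hi Hkr Ht) as Hxt. pose proof (w_abs_le i k t Hkr Ht).
  assert (Hf : Rabs (f i k t - / INR n * rsum n (fun j => f j k t)) <= beta i).
  { eapply Rle_trans; [|apply (beta_row_le ltac:(lia) i Hi)].
    apply (dev_mean_abs_le n l src dst (proj1 Hgraph) P HP Hconn (fun j => f j k t)); auto.
    intros e He. apply f_edge_le; auto. }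
  unfold Dxt. eapply Rle_trans; [apply Rabs_triang|].
  eapply Rle_trans; [apply Rplus_le_compat_r, Rabs_triang|].
  rewrite Rabs_Ropp, Rabs_mult, Rabs_Ropp, (Rabs_pos_eq gamma) by lra.
  pose proof (Rmult_le_compat_l gamma _ _ ltac:(lra) Hxt). lra.
Qed.

Lemma consensus_error_vanishes :
  forall i k, (i < n)%nat -> (k < r)%nat ->
  forall eps, 0 < eps -> exists T, forall t, T <= t ->
    Rabs (z i k t + phi i k t - / INR n * rsum n (fun j => phi j k t)) < eps.
Proof.
  intros i k Hi Hkr.
  apply (vanishes_of_lyapunov V DV (xt i k) t0 gamma
           (gamma * (1 + 2 * V t0) + beta i + INR l * (Rabs kst + 1 + 2 * V t0))); auto.
  - apply V_rderiv.
  - apply V_cont.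
  - intros t Ht. eapply Rle_trans; [apply DV_le; auto; lia|].
    pose proof (rsum2_term_le r n (fun k i => xt i k t * xt i k t) k i ltac:(intros; nra) Hkr Hi).
    simpl in *. nra.
  - apply V_nonneg.
  - intros a b Hab. apply (lipschitz_of_rderiv_bounded (xt i k) (Dxt i k)); [lra| | |].
    + intros; apply xt_rderiv; auto; lra.
    + intros; apply Dxt_abs_le; auto; lra.
    + intros; apply xt_cont; auto; lra.
Qed.

End Estimator.

Theorem theorem2
  (n r l : nat) (src dst : nat -> nat)
  (* (A1) *)
  (Hgraph : undirected_edge_list n l src dst)
  (Hconn : connected n l src dst)
  (phi dphi : nat -> nat -> R -> R)
  (Hphi : forall i k t, (i < n)%nat -> (k < r)%nat -> derivable_pt_lim (phi i k) t (dphi i k t))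
  (Hdphi : forall i k t, (i < n)%nat -> (k < r)%nat -> continuity_pt (dphi i k) t)
  (* (A2) *)
  (varphi dvarphi : R)
  (HA2 : forall t, 0 <= t -> forall e k, (e < l)%nat -> (k < r)%nat ->
     Rabs (phi (dst e) k t - phi (src e) k t) <= varphi /\
     Rabs (dphi (dst e) k t - dphi (src e) k t) <= dvarphi)
  (gamma : R) (Hgamma : 0 < gamma)
  (* (A3), with P = (B^T B)^+ *)
  (P : nat -> nat -> R)
  (HP : is_pinv l l (mmul n (mtr (Binc src dst)) (Binc src dst)) P)
  (beta : nat -> R)
  (HA3 : forall i, (i < n)%nat ->
     (gamma * varphi + dvarphi) *
       infnorm (n * r) (l * r) (kronI r (mmul l (Binc src dst) P)) <= beta i)
  (alpha delta theta : nat -> R)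
  (Halpha : forall i, (i < n)%nat -> 0 < alpha i)
  (Hdelta : forall i, (i < n)%nat -> 1 <= delta i)
  (Htheta : forall i, (i < n)%nat -> 0 < theta i < 1)
  (t0 : R) (Ht0 : 0 <= t0)
  (z : nat -> nat -> R -> R) (kappa : nat -> nat -> R -> R)
  (eta : nat -> R -> R) (trig : nat -> R -> Prop) (xhat : nat -> nat -> R -> R)
  (Hz_cont : forall i k t, (i < n)%nat -> (k < r)%nat -> t0 < t -> continuity_pt (z i k) t)
  (Hz : forall i k t, (i < n)%nat -> (k < r)%nat -> t0 <= t ->
     rderiv (z i k) t (- gamma * z i k t - w_sig l src dst kappa xhat i k t))
  (Hk_cont : forall e k t, (e < l)%nat -> (k < r)%nat -> t0 < t -> continuity_pt (kappa e k) t)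
  (Hk : forall e k t, (e < l)%nat -> (k < r)%nat -> t0 <= t ->
     rderiv (kappa e k) t (Rabs (xi_hat src dst xhat e k t)))
  (Hk0 : forall e k, (e < l)%nat -> (k < r)%nat -> 0 < kappa e k t0)
  (Hksym : forall e e' k, (e < l)%nat -> (e' < l)%nat -> (k < r)%nat ->
     src e' = dst e -> dst e' = src e -> kappa e k t0 = kappa e' k t0)
  (Heta_cont : forall i t, (i < n)%nat -> t0 < t -> continuity_pt (eta i) t)
  (Heta : forall i t, (i < n)%nat -> t0 <= t ->
     rderiv (eta i) t
       (- alpha i * eta i t
        - delta i * (beta i * rsum r (fun k => Rabs (z i k t + phi i k t - xhat i k t))
                     - rsum r (fun k => w_sig l src dst kappa xhat i k t
                                        * (z i k t + phi i k t - xhat i k t)))))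
  (Heta0 : forall i, (i < n)%nat -> 0 < eta i t0)
  (Htrig0 : forall i, (i < n)%nat -> trig i t0)
  (Htrig_ge : forall i t, (i < n)%nat -> trig i t -> t0 <= t)
  (Hxhat : forall i t, (i < n)%nat -> t0 <= t ->
     exists s, trig i s /\ s <= t /\ (forall u, s < u <= t -> ~ trig i u) /\
       forall k, (k < r)%nat -> xhat i k t = z i k s + phi i k s)
  (Htrig_next : forall i t, (i < n)%nat -> trig i t -> t0 < t ->
     exists s, trig i s /\ s < t /\ (forall u, s < u < t -> ~ trig i u) /\
       trig_cond r (theta i) (beta i) (fun k u => z i k u + phi i k u)
         (w_sig l src dst kappa xhat i) (eta i) s t /\
       (forall u, s < u < t ->
         ~ trig_cond r (theta i) (beta i) (fun k u => z i k u + phi i k u)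
             (w_sig l src dst kappa xhat i) (eta i) s u))
  (Htrig_fire : forall i s t, (i < n)%nat -> trig i s -> s < t ->
     trig_cond r (theta i) (beta i) (fun k u => z i k u + phi i k u)
       (w_sig l src dst kappa xhat i) (eta i) s t ->
     exists u, trig i u /\ s < u <= t)
  :
  forall i k, (i < n)%nat -> (k < r)%nat ->
  forall eps, 0 < eps -> exists T, forall t, T <= t ->
    Rabs (z i k t + phi i k t - / INR n * rsum n (fun j => phi j k t)) < eps.
Proof.
  exact (consensus_error_vanishes n r l src dst Hgraph Hconn phi dphi Hphi varphi dvarphi HA2
    gamma Hgamma P HP beta HA3 alpha delta theta Halpha Hdelta Htheta t0 Ht0 z kappa eta trig xhat
    Hz_cont Hz Hk_cont Hk Heta_cont Heta Heta0 Hxhat Htrig_fire).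
Qed.
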